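(* Let $\sigma_j$, $\lambda_j$, $\Lambda_j$ be, respectively, the eigenvalues on $(0,1)$ of the buckling problem $u''''=-\sigma u''$ with $u(0)=u'(0)=u(1)=u'(1)=0$, of the Dirichlet Laplacian $-u''=\lambda u$ with $u(0)=u(1)=0$, and of the Dirichlet Bilaplacian $u''''=\Lambda u$ with $u(0)=u'(0)=u(1)=u'(1)=0$, each listed in increasing order. Then for all $j\in\mathbb N$, $$\Lambda_j>\lambda_j\sigma_j.$$
   Context: All three problems have simple eigenvalues forming increasing sequences $\to+\infty$; the problems are understood in the weak sense in $H^1_0(0,1)$ (Laplacian) and $H^2_0(0,1)$ (the two fourth-order problems). *)

From Stdlib Require Import Reals List.
From Coquelicot Require Import Coquelicot.
Open Scope R_scope.

(* Smooth functions on R (eigenfunctions of these 1D problems are real-analytic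
   combinations of sin/cos/sinh/cosh/polynomials, hence extend smoothly). *)
Definition smooth (u : R -> R) : Prop := forall (k : nat) (x : R), ex_derive_n u k x.

Definition nontrivial01 (u : R -> R) : Prop := exists x, 0 < x < 1 /\ u x <> 0.

Definition lap_eig (lam : R) : Prop :=
  exists u : R -> R, smooth u /\ nontrivial01 u /\
    u 0 = 0 /\ u 1 = 0 /\
    (forall x, 0 < x < 1 -> - Derive_n u 2 x = lam * u x).

Definition bilap_eig (Lam : R) : Prop :=
  exists u : R -> R, smooth u /\ nontrivial01 u /\
    u 0 = 0 /\ Derive_n u 1 0 = 0 /\ u 1 = 0 /\ Derive_n u 1 1 = 0 /\
    (forall x, 0 < x < 1 -> Derive_n u 4 x = Lam * u x).

Definition buck_eig (sig : R) : Prop :=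
  exists u : R -> R, smooth u /\ nontrivial01 u /\
    u 0 = 0 /\ Derive_n u 1 0 = 0 /\ u 1 = 0 /\ Derive_n u 1 1 = 0 /\
    (forall x, 0 < x < 1 -> Derive_n u 4 x = - sig * Derive_n u 2 x).

(* [nth_eig E j x]: x is an eigenvalue and exactly j eigenvalues are strictly
   smaller than x, i.e. x is the (j+1)-th eigenvalue in increasing order
   (eigenvalues are simple, so listed without repetition). *)
Definition nth_eig (E : R -> Prop) (j : nat) (x : R) : Prop :=
  E x /\ exists l : list R, length l = j /\ NoDup l /\
    (forall y, In y l <-> (E y /\ y < x)).

From Stdlib Require Import Reals Lra Lia Psatz List Classical.
From Coquelicot Require Import Coquelicot.
Open Scope R_scope.

(* The proof computes the three spectra explicitly.
   1. Uniqueness for constant-coefficient ODEs with zero Cauchy data at 0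
      (oscillator, hyperbolic, and the fourth-order (D^2-m^2)(D^2+s^2)).
   2. Energy identities exclude nonpositive eigenvalues.
   3. Comparing an eigenfunction with explicit fundamental solutions
      (combinations of 1, x, cos, sin, cosh, sinh) gives the characteristic
      equations: sin s = 0 (lambda = s^2), s sin s = 2 (1 - cos s)
      (sigma = s^2) and cos s cosh s = 1 (Lambda = s^4); conversely each root
      gives an explicit eigenfunction.
   4. With s = 2t these equations factor; a zero-counting argument on cells of
      length pi enumerates the positive roots as increasing sequences, and an
      increasing enumeration of a spectrum identifies its j-th eigenvalue.
   5. Quantitative localisation of the roots (the clamped ones lie within
      pi/4 + O(e^{-2t}) of multiples of pi) yields the inequality, separately
      for even and odd indices. *)

Lemma is_derive_Rmult (f g : R -> R) x df dg :
  is_derive f x df -> is_derive g x dg ->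
  is_derive (fun t => f t * g t) x (df * g x + f x * dg).
Proof.
  intros Hf Hg. apply is_derive_Reals.
  apply derivable_pt_lim_mult; apply is_derive_Reals; assumption.
Qed.

Lemma is_derive_Rplus (f g : R -> R) x df dg :
  is_derive f x df -> is_derive g x dg ->
  is_derive (fun t => f t + g t) x (df + dg).
Proof.
  intros Hf Hg. apply is_derive_Reals.
  apply derivable_pt_lim_plus; apply is_derive_Reals; assumption.
Qed.

Lemma is_derive_Rminus (f g : R -> R) x df dg :
  is_derive f x df -> is_derive g x dg ->
  is_derive (fun t => f t - g t) x (df - dg).
Proof.
  intros Hf Hg. apply is_derive_Reals.
  apply derivable_pt_lim_minus; apply is_derive_Reals; assumption.
Qed.

Lemma mean_value (f df : R -> R) x y :
  (forall z, is_derive f z (df z)) -> x < y ->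
  exists c, x < c < y /\ f y - f x = df c * (y - x).
Proof.
  intros Hd Hxy. destruct (MVT_cor2 f df x y Hxy) as [c [Hc Hin]].
  - intros c _. apply is_derive_Reals, Hd.
  - exists c. split; assumption.
Qed.

Lemma nonincreasing_of_deriv (f df : R -> R) a b :
  (forall x, is_derive f x (df x)) -> (forall x, a < x < b -> df x <= 0) ->
  forall x y, a <= x -> x <= y -> y <= b -> f y <= f x.
Proof.
  intros Hd Hneg x y Hax Hxy Hyb.
  destruct (Req_dec x y) as [<-|Hne]; [lra|].
  destruct (mean_value f df x y Hd) as [c [Hc Hmvt]]; [lra|].
  assert (df c <= 0) by (apply Hneg; lra). nra.
Qed.

Lemma constant_of_deriv_zero (f df : R -> R) a b :
  (forall x, is_derive f x (df x)) -> (forall x, a < x < b -> df x = 0) ->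
  forall x, a <= x <= b -> f x = f a.
Proof.
  intros Hd Hzero x Hx.
  destruct (Req_dec x a) as [->|Hne]; [reflexivity|].
  destruct (mean_value f df a x Hd) as [c [Hc Hmvt]]; [lra|].
  rewrite Hzero in Hmvt by lra. lra.
Qed.

Lemma deriv_of_vanishing (F : R -> R) x0 l :
  (forall x, 0 < x < 1 -> F x = 0) -> 0 < x0 < 1 -> is_derive F x0 l -> l = 0.
Proof.
  intros Hzero Hx0 Hd.
  assert (Hr : 0 < Rmin x0 (1 - x0)) by (apply Rmin_glb_lt; lra).
  assert (Hloc : locally x0 (fun t => F t = 0)).
  { exists (mkposreal _ Hr). intros y Hy. apply Hzero.
    change (Rabs (y - x0) < Rmin x0 (1 - x0)) in Hy.
    pose proof (Rmin_l x0 (1 - x0)). pose proof (Rmin_r x0 (1 - x0)).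
    apply Rabs_def2 in Hy. lra. }
  apply (is_derive_unique F x0 l) in Hd. rewrite <- Hd.
  rewrite (Derive_ext_loc F (fun _ => 0) x0 Hloc). apply Derive_const.
Qed.

Lemma dissipation_vanishes (G dG : R -> R) :
  (forall x, is_derive G x (dG x)) -> (forall x, 0 < x < 1 -> dG x <= 0) ->
  G 0 = 0 -> G 1 = 0 -> forall x, 0 < x < 1 -> dG x = 0.
Proof.
  intros Hd Hneg H0 H1 x Hx.
  apply (deriv_of_vanishing G x); [|assumption|apply Hd].
  intros y Hy.
  pose proof (nonincreasing_of_deriv G dG 0 1 Hd Hneg 0 y).
  pose proof (nonincreasing_of_deriv G dG 0 1 Hd Hneg y 1). lra.
Qed.

(* A solution of f' = c f with f(0) = 0 vanishes on [0,1]: f(t) e^{-ct} is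
   constant. *)
Lemma first_order_zero (f df : R -> R) c :
  (forall x, is_derive f x (df x)) -> (forall x, 0 < x < 1 -> df x = c * f x) ->
  f 0 = 0 -> forall x, 0 <= x <= 1 -> f x = 0.
Proof.
  intros Hd Hode H0 x Hx.
  set (g := fun t => f t * exp (- c * t)).
  assert (Hg : forall t, is_derive g t (df t * exp (- c * t) + f t * (- c * exp (- c * t)))).
  { intro t. apply (is_derive_Rmult f (fun s => exp (- c * s))); [apply Hd|].
    auto_derive; [exact I|ring]. }
  assert (Hconst : g x = g 0).
  { apply (constant_of_deriv_zero g _ 0 1 Hg); [|assumption].
    intros t Ht. rewrite Hode by assumption. ring. }
  unfold g in Hconst. rewrite H0 in Hconst. pose proof (exp_pos (- c * x)). nra.
Qed.

Definition deriv_chain (f : nat -> R -> R) : Prop :=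
  forall k x, is_derive (f k) x (f (S k) x).

Lemma smooth_deriv_chain (u : R -> R) : smooth u -> deriv_chain (Derive_n u).
Proof. intros Hs k x. apply Derive_correct, (Hs (S k) x). Qed.

(* Uniqueness for w'' = -s^2 w with zero Cauchy data at 0, via the conserved
   energy w'^2 + s^2 w^2. *)
Lemma oscillator_zero (f : nat -> R -> R) s :
  deriv_chain f -> (forall x, 0 < x < 1 -> f 2%nat x = - (s * s) * f 0%nat x) ->
  f 0%nat 0 = 0 -> f 1%nat 0 = 0 ->
  forall x, 0 <= x <= 1 -> f 0%nat x = 0 /\ f 1%nat x = 0.
Proof.
  intros Hc Hode H0 H1.
  set (E := fun t => f 1%nat t * f 1%nat t + s * s * (f 0%nat t * f 0%nat t)).
  assert (HE : forall x, 0 <= x <= 1 -> E x = 0).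
  { apply (first_order_zero E (fun t => (f 2%nat t * f 1%nat t + f 1%nat t * f 2%nat t)
        + s * s * (f 1%nat t * f 0%nat t + f 0%nat t * f 1%nat t)) 0).
    - intro x. apply is_derive_Rplus; [apply is_derive_Rmult; apply Hc|].
      apply is_derive_scal, is_derive_Rmult; apply Hc.
    - intros x Hx. rewrite Hode by assumption. ring.
    - unfold E. rewrite H0, H1. ring. }
  assert (Hf1 : forall x, 0 <= x <= 1 -> f 1%nat x = 0).
  { intros x Hx. specialize (HE x Hx). unfold E in HE. nra. }
  intros x Hx. split; [|apply Hf1, Hx].
  apply (first_order_zero (f 0%nat) (f 1%nat) 0); [apply Hc| |assumption|assumption].
  intros y Hy. rewrite Hf1 by lra. ring.
Qed.

(* Uniqueness for w'' = m^2 w with zero Cauchy data at 0, by factoring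
   D^2 - m^2 = (D + m)(D - m) into two first-order problems. *)
Lemma hyperbolic_zero (f : nat -> R -> R) m :
  deriv_chain f -> (forall x, 0 < x < 1 -> f 2%nat x = m * m * f 0%nat x) ->
  f 0%nat 0 = 0 -> f 1%nat 0 = 0 -> forall x, 0 <= x <= 1 -> f 0%nat x = 0.
Proof.
  intros Hc Hode H0 H1.
  set (p := fun t => f 1%nat t - m * f 0%nat t).
  assert (Hp : forall x, 0 <= x <= 1 -> p x = 0).
  { apply (first_order_zero p (fun t => f 2%nat t - m * f 1%nat t) (- m)).
    - intro x. apply is_derive_Rminus; [apply Hc|apply is_derive_scal, Hc].
    - intros x Hx. unfold p. rewrite Hode by assumption. ring.
    - unfold p. rewrite H0, H1. ring. }
  apply (first_order_zero (f 0%nat) (f 1%nat) m); [apply Hc| |assumption].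
  intros x Hx. specialize (Hp x ltac:(lra)). unfold p in Hp. lra.
Qed.

(* The fourth-order equation (D^2 - m^2)(D^2 + s^2) w = 0 on (0,1). *)
Definition fourth_order_ode (s m : R) (f : nat -> R -> R) : Prop :=
  forall x, 0 < x < 1 ->
    f 4%nat x = (m * m - s * s) * f 2%nat x + m * m * (s * s) * f 0%nat x.

(* Uniqueness for the fourth-order equation: w'' + s^2 w solves the
   hyperbolic equation, so it vanishes, and then w solves the oscillator. *)
Lemma fourth_order_zero (f : nat -> R -> R) s m :
  deriv_chain f -> fourth_order_ode s m f ->
  f 0%nat 0 = 0 -> f 1%nat 0 = 0 -> f 2%nat 0 = 0 -> f 3%nat 0 = 0 ->
  forall x, 0 <= x <= 1 -> f 0%nat x = 0 /\ f 1%nat x = 0.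
Proof.
  intros Hc Hode H0 H1 H2 H3.
  set (g := fun k t => f (S (S k)) t + s * s * f k t).
  assert (Hg : deriv_chain g).
  { intros k x. apply is_derive_Rplus; [apply Hc|apply is_derive_scal, Hc]. }
  assert (Hg0 : forall x, 0 <= x <= 1 -> g 0%nat x = 0).
  { apply (hyperbolic_zero g m Hg).
    - intros x Hx. unfold g. rewrite Hode by assumption. ring.
    - unfold g. rewrite H0, H2. ring.
    - unfold g. rewrite H1, H3. ring. }
  apply (oscillator_zero f s Hc); [|assumption|assumption].
  intros x Hx. specialize (Hg0 x ltac:(lra)). unfold g in Hg0. lra.
Qed.

(* Energy identity for w'' = b w with Dirichlet conditions: the flux -w w'
   has derivative -w'^2 - b w^2 <= 0 when b >= 0, which forces w' = 0. *)
Lemma dirichlet_energy_zero (f : nat -> R -> R) b :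
  deriv_chain f -> 0 <= b -> (forall x, 0 < x < 1 -> f 2%nat x = b * f 0%nat x) ->
  f 0%nat 0 = 0 -> f 0%nat 1 = 0 -> forall x, 0 <= x <= 1 -> f 0%nat x = 0.
Proof.
  intros Hc Hb Hode H0 H1.
  set (dG := fun t => -1 * (f 1%nat t * f 1%nat t + f 0%nat t * f 2%nat t)).
  assert (Hflat : forall x, 0 < x < 1 -> dG x = 0).
  { apply (dissipation_vanishes (fun t => -1 * (f 0%nat t * f 1%nat t))).
    - intro x. apply is_derive_scal, is_derive_Rmult; apply Hc.
    - intros x Hx. unfold dG. rewrite Hode by assumption. nra.
    - rewrite H0. ring.
    - rewrite H1. ring. }
  apply (first_order_zero (f 0%nat) (f 1%nat) 0); [apply Hc| |assumption].
  intros x Hx. specialize (Hflat x Hx). unfold dG in Hflat.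
  rewrite Hode in Hflat by assumption. nra.
Qed.

(* Energy identity for w'''' = a w'' + b w with clamped conditions: the flux
   w w''' - w' w'' - a w w' has derivative b w^2 - w''^2 - a w'^2 <= 0 when
   a >= 0 >= b, which forces w'' = 0 and hence w = 0. *)
Lemma clamped_energy_zero (f : nat -> R -> R) a b :
  deriv_chain f -> 0 <= a -> b <= 0 ->
  (forall x, 0 < x < 1 -> f 4%nat x = a * f 2%nat x + b * f 0%nat x) ->
  f 0%nat 0 = 0 -> f 1%nat 0 = 0 -> f 0%nat 1 = 0 -> f 1%nat 1 = 0 ->
  forall x, 0 <= x <= 1 -> f 0%nat x = 0.
Proof.
  intros Hc Ha Hb Hode H00 H10 H01 H11.
  set (dG := fun t => (f 1%nat t * f 3%nat t + f 0%nat t * f 4%nat t)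
                      - (f 2%nat t * f 2%nat t + f 1%nat t * f 3%nat t)
                      - a * (f 1%nat t * f 1%nat t + f 0%nat t * f 2%nat t)).
  assert (Hflat : forall x, 0 < x < 1 -> dG x = 0).
  { apply (dissipation_vanishes
      (fun t => f 0%nat t * f 3%nat t - f 1%nat t * f 2%nat t - a * (f 0%nat t * f 1%nat t))).
    - intro x. apply is_derive_Rminus; [apply is_derive_Rminus|apply is_derive_scal];
        apply is_derive_Rmult; apply Hc.
    - intros x Hx. unfold dG. rewrite Hode by assumption. nra.
    - rewrite H00, H10. ring.
    - rewrite H01, H11. ring. }
  intros x Hx. apply (oscillator_zero f 0 Hc); [|assumption|assumption|assumption].
  intros y Hy. specialize (Hflat y Hy). unfold dG in Hflat.
  rewrite Hode in Hflat by assumption. nra.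
Qed.

Lemma vanishing_not_nontrivial (u : R -> R) :
  (forall x, 0 <= x <= 1 -> u x = 0) -> ~ nontrivial01 u.
Proof. intros Hzero [x [Hx Hu]]. apply Hu, Hzero. lra. Qed.

(* A smooth function with some nonzero derivative at 0 does not vanish
   identically on (0,1): otherwise all its derivatives would vanish on (0,1),
   hence at 0 by the mean value theorem. *)
Lemma nontrivial_of_deriv_at0 (u : R -> R) k :
  smooth u -> Derive_n u k 0 <> 0 -> nontrivial01 u.
Proof.
  intros Hs Hk. apply NNPP. intro Htriv.
  assert (Hzero : forall n x, 0 < x < 1 -> Derive_n u n x = 0).
  { induction n as [|n IH]; intros x Hx.
    - destruct (Req_dec (u x) 0) as [|Hne]; [assumption|].
      exfalso. apply Htriv. exists x. split; assumption.
    - apply (deriv_of_vanishing (Derive_n u n) x); [apply IH|assumption|].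
      apply (smooth_deriv_chain u Hs). }
  apply Hk. rewrite <- (Hzero k (1 / 2)) at 2 by lra. symmetry.
  apply (constant_of_deriv_zero (Derive_n u k) (Derive_n u (S k)) 0 (1 / 2)).
  - apply (smooth_deriv_chain u Hs).
  - intros x Hx. apply Hzero. lra.
  - lra.
Qed.

Record coeffs := Coeffs
  { c_one : R; c_x : R; c_cos : R; c_sin : R; c_cosh : R; c_sinh : R }.

Definition ansatz (s m : R) (p : coeffs) (x : R) : R :=
  c_one p + c_x p * x + c_cos p * cos (s * x) + c_sin p * sin (s * x)
  + c_cosh p * cosh (m * x) + c_sinh p * sinh (m * x).

Definition coeffs_deriv (s m : R) (p : coeffs) : coeffs :=
  Coeffs (c_x p) 0 (s * c_sin p) (- s * c_cos p) (m * c_sinh p) (m * c_cosh p).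

Definition ansatz_chain (s m : R) (p : coeffs) (k : nat) : R -> R :=
  ansatz s m (Nat.iter k (coeffs_deriv s m) p).

Lemma ansatz_deriv s m p x : is_derive (ansatz s m p) x (ansatz s m (coeffs_deriv s m p) x).
Proof. unfold ansatz, coeffs_deriv, cosh, sinh; simpl. auto_derive; [exact I|field]. Qed.

Lemma ansatz_deriv_chain s m p : deriv_chain (ansatz_chain s m p).
Proof. intros k x. apply ansatz_deriv. Qed.

Lemma ansatz_Derive_n s m p k x : Derive_n (ansatz s m p) k x = ansatz_chain s m p k x.
Proof.
  revert x. induction k as [|k IH]; intro x; [reflexivity|].
  simpl. rewrite (Derive_ext _ _ x IH). apply is_derive_unique, ansatz_deriv.
Qed.

Lemma ansatz_smooth s m p : smooth (ansatz s m p).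
Proof.
  intros [|k] x; [exact I|]. simpl.
  apply (ex_derive_ext (ansatz_chain s m p k)); [intro; symmetry; apply ansatz_Derive_n|].
  eexists. apply ansatz_deriv_chain.
Qed.

Lemma ansatz_at0 s m p : ansatz s m p 0 = c_one p + c_cos p + c_cosh p.
Proof. unfold ansatz. rewrite !Rmult_0_r, sin_0, cos_0, cosh_0, sinh_0. ring. Qed.

Lemma ansatz_at1 s m p : ansatz s m p 1 =
  c_one p + c_x p + c_cos p * cos s + c_sin p * sin s + c_cosh p * cosh m + c_sinh p * sinh m.
Proof. unfold ansatz. rewrite !Rmult_1_r. ring. Qed.

Lemma ansatz_fourth_order_ode s m p :
  m = 0 \/ (c_one p = 0 /\ c_x p = 0) -> fourth_order_ode s m (ansatz_chain s m p).
Proof.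
  intros Hp x _. unfold ansatz_chain, ansatz; simpl.
  destruct Hp as [-> | [-> ->]]; ring.
Qed.

Lemma singular_2x2 a b c d x y :
  a * x + b * y = 0 -> c * x + d * y = 0 -> x <> 0 \/ y <> 0 -> a * d - b * c = 0.
Proof.
  intros E1 E2 Hxy.
  assert (Ex : (a * d - b * c) * x = 0).
  { replace ((a * d - b * c) * x) with (d * (a * x + b * y) - b * (c * x + d * y)) by ring.
    rewrite E1, E2. ring. }
  assert (Ey : (a * d - b * c) * y = 0).
  { replace ((a * d - b * c) * y) with (a * (c * x + d * y) - c * (a * x + b * y)) by ring.
    rewrite E1, E2. ring. }
  destruct Hxy as [Hx|Hy].
  - apply Rmult_integral in Ex. tauto.
  - apply Rmult_integral in Ey. tauto.
Qed.

(* Dirichlet problem for w'' = -s^2 w: a nontrivial solution with w(0) = 0 is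
   a multiple of the fundamental solution g with g(0) = 0, g'(0) = 1, so
   w(1) = 0 forces g(1) = 0. *)
Lemma dirichlet_boundary_condition (f g : nat -> R -> R) s :
  deriv_chain f -> deriv_chain g ->
  (forall x, 0 < x < 1 -> f 2%nat x = - (s * s) * f 0%nat x) ->
  (forall x, 0 < x < 1 -> g 2%nat x = - (s * s) * g 0%nat x) ->
  g 0%nat 0 = 0 -> g 1%nat 0 = 1 ->
  f 0%nat 0 = 0 -> f 0%nat 1 = 0 -> nontrivial01 (f 0%nat) -> g 0%nat 1 = 0.
Proof.
  intros Hf Hg Hodef Hodeg Hg0 Hg1 Hf0 Hf1 Hnt.
  set (a := f 1%nat 0).
  assert (Hagree : forall x, 0 <= x <= 1 -> f 0%nat x - a * g 0%nat x = 0).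
  { intros x Hx. refine (proj1 (oscillator_zero (fun k t => f k t - a * g k t) s _ _ _ _ x Hx)).
    - intros k t. apply is_derive_Rminus; [apply Hf|apply is_derive_scal, Hg].
    - intros t Ht. rewrite Hodef, Hodeg by assumption. ring.
    - rewrite Hf0, Hg0. ring.
    - rewrite Hg1. unfold a. ring. }
  assert (Ha : a <> 0).
  { intro Ha. apply (vanishing_not_nontrivial (f 0%nat)); [|assumption].
    intros x Hx. specialize (Hagree x Hx). rewrite Ha in Hagree. lra. }
  specialize (Hagree 1 ltac:(lra)). rewrite Hf1 in Hagree.
  assert (Hprod : a * g 0%nat 1 = 0) by lra.
  apply Rmult_integral in Hprod. tauto.
Qed.

(* Clamped problem for (D^2 - m^2)(D^2 + s^2) w = 0: a nontrivial solution
   with w(0) = w'(0) = 0 is a combination of the fundamental solutions g, h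
   whose Cauchy data at 0 are (0,0,alpha,0) and (0,0,0,beta); hence
   w(1) = w'(1) = 0 forces the boundary determinant of g, h at 1 to vanish. *)
Lemma clamped_boundary_determinant (f g h : nat -> R -> R) s m alpha beta :
  deriv_chain f -> deriv_chain g -> deriv_chain h ->
  fourth_order_ode s m f -> fourth_order_ode s m g -> fourth_order_ode s m h ->
  g 0%nat 0 = 0 -> g 1%nat 0 = 0 -> g 2%nat 0 = alpha -> g 3%nat 0 = 0 ->
  h 0%nat 0 = 0 -> h 1%nat 0 = 0 -> h 2%nat 0 = 0 -> h 3%nat 0 = beta ->
  alpha <> 0 -> beta <> 0 ->
  f 0%nat 0 = 0 -> f 1%nat 0 = 0 -> f 0%nat 1 = 0 -> f 1%nat 1 = 0 ->
  nontrivial01 (f 0%nat) ->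
  g 0%nat 1 * h 1%nat 1 - h 0%nat 1 * g 1%nat 1 = 0.
Proof.
  intros Hf Hg Hh Hodef Hodeg Hodeh Hg0 Hg1 Hg2 Hg3 Hh0 Hh1 Hh2 Hh3 Ha Hb
    Hf00 Hf10 Hf01 Hf11 Hnt.
  set (a := f 2%nat 0 / alpha). set (b := f 3%nat 0 / beta).
  set (r := fun k t => f k t - a * g k t - b * h k t).
  assert (Hagree : forall x, 0 <= x <= 1 -> r 0%nat x = 0 /\ r 1%nat x = 0).
  { apply (fourth_order_zero r s m).
    - intros k t. apply is_derive_Rminus; [apply is_derive_Rminus|];
        [apply Hf|apply is_derive_scal, Hg|apply is_derive_scal, Hh].
    - intros t Ht. unfold r. rewrite Hodef, Hodeg, Hodeh by assumption. ring.
    - unfold r. rewrite Hf00, Hg0, Hh0. ring.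
    - unfold r. rewrite Hf10, Hg1, Hh1. ring.
    - unfold r, a. rewrite Hg2, Hh2. field. assumption.
    - unfold r, b. rewrite Hg3, Hh3. field. assumption. }
  destruct (Hagree 1 ltac:(lra)) as [E0 E1]. unfold r in E0, E1.
  rewrite Hf01 in E0. rewrite Hf11 in E1.
  apply (singular_2x2 _ _ _ _ a b); [lra|lra|].
  destruct (Req_dec a 0) as [Ha0|]; [|tauto]. destruct (Req_dec b 0) as [Hb0|]; [|tauto].
  exfalso. apply (vanishing_not_nontrivial (f 0%nat)); [|assumption].
  intros x Hx. destruct (Hagree x Hx) as [Ex _]. unfold r in Ex.
  rewrite Ha0, Hb0 in Ex. lra.
Qed.

Lemma sin_cos_sq x : sin x * sin x + cos x * cos x = 1.
Proof. rewrite <- (sin2_cos2 x). unfold Rsqr. ring. Qed.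

Lemma cosh_sinh_sq x : cosh x * cosh x - sinh x * sinh x = 1.
Proof.
  unfold cosh, sinh. pose proof (exp_plus x (- x)) as E.
  replace (x + - x) with 0 in E by ring. rewrite exp_0 in E. nra.
Qed.

Lemma cosh_gt_1 x : x <> 0 -> 1 < cosh x.
Proof.
  intro Hx. unfold cosh. pose proof (exp_ineq1 x Hx). pose proof (exp_ineq1 (- x)). lra.
Qed.

Ltac ansatz_eval :=
  unfold ansatz_chain; simpl Nat.iter;
  rewrite ?ansatz_at0, ?ansatz_at1; cbn [coeffs_deriv c_one c_x c_cos c_sin c_cosh c_sinh].

Lemma lap_eig_sin lam : lap_eig lam -> 0 < lam /\ sin (sqrt lam) = 0.
Proof.
  intros [u [Hs [Hnt [H0 [H1 Hode]]]]].
  assert (Hc := smooth_deriv_chain u Hs).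
  assert (Hpos : 0 < lam).
  { apply Rnot_le_lt. intro Hl. apply (vanishing_not_nontrivial u); [|assumption].
    apply (dirichlet_energy_zero (Derive_n u) (- lam) Hc); [lra| |assumption|assumption].
    intros x Hx. specialize (Hode x Hx). simpl Derive_n at 2. lra. }
  split; [assumption|].
  set (s := sqrt lam). assert (Hs0 : 0 < s) by (apply sqrt_lt_R0; assumption).
  assert (Hss : s * s = lam) by (apply sqrt_sqrt; lra).
  set (g := ansatz_chain s 0 (Coeffs 0 0 0 (/ s) 0 0)).
  assert (Hg1 : g 0%nat 1 = 0).
  { apply (dirichlet_boundary_condition (Derive_n u) g s Hc (ansatz_deriv_chain _ _ _));
      [| |unfold g; ansatz_eval; ring|unfold g; ansatz_eval; field; lra
        |assumption|assumption|assumption].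
    - intros x Hx. specialize (Hode x Hx). simpl Derive_n at 2. rewrite Hss. lra.
    - intros x _. unfold g, ansatz_chain, ansatz; simpl. ring. }
  revert Hg1. unfold g. ansatz_eval. intro Hg1.
  apply (Rmult_eq_reg_l (/ s)); [lra|].
  apply Rinv_neq_0_compat. lra.
Qed.

(* Buckling problem: eigenvalues are positive and s = sqrt sig satisfies
   s sin s = 2 (1 - cos s), the vanishing of the boundary determinant of the
   fundamental solutions 1 - cos (s x) and s x - sin (s x). *)
Lemma buck_eig_eq sig : buck_eig sig ->
  0 < sig /\ sqrt sig * sin (sqrt sig) = 2 * (1 - cos (sqrt sig)).
Proof.
  intros [u [Hs [Hnt [H00 [H10 [H01 [H11 Hode]]]]]]].
  assert (Hc := smooth_deriv_chain u Hs).
  assert (Hpos : 0 < sig).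
  { apply Rnot_le_lt. intro Hl. apply (vanishing_not_nontrivial u); [|assumption].
    apply (clamped_energy_zero (Derive_n u) (- sig) 0 Hc); try assumption; [lra|lra|].
    intros x Hx. rewrite Hode by assumption. ring. }
  split; [assumption|].
  set (s := sqrt sig). assert (Hs0 : 0 < s) by (apply sqrt_lt_R0; assumption).
  assert (Hss : s * s = sig) by (apply sqrt_sqrt; lra).
  set (g := ansatz_chain s 0 (Coeffs 1 0 (-1) 0 0 0)).
  set (h := ansatz_chain s 0 (Coeffs 0 s 0 (-1) 0 0)).
  assert (Hdet : g 0%nat 1 * h 1%nat 1 - h 0%nat 1 * g 1%nat 1 = 0).
  {
    apply (clamped_boundary_determinant (Derive_n u) g h s 0 (s * s) (s * s * s));
      try apply ansatz_deriv_chain; try apply ansatz_fourth_order_ode; auto;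
      try (unfold g, h; ansatz_eval; ring); try nra.
    intros x Hx. rewrite Hode, Hss by assumption. ring. }
  revert Hdet. unfold g, h. ansatz_eval. intro Hdet.
  pose proof (sin_cos_sq s). apply (Rmult_eq_reg_l s); [|lra]. nra.
Qed.

(* Dirichlet Bilaplacian: eigenvalues are positive and s = Lam^(1/4) satisfies
   cos s cosh s = 1, the vanishing of the boundary determinant of the
   fundamental solutions cosh (s x) - cos (s x) and sinh (s x) - sin (s x). *)
Lemma bilap_eig_eq Lam : bilap_eig Lam ->
  0 < Lam /\ cos (sqrt (sqrt Lam)) * cosh (sqrt (sqrt Lam)) = 1.
Proof.
  intros [u [Hs [Hnt [H00 [H10 [H01 [H11 Hode]]]]]]].
  assert (Hc := smooth_deriv_chain u Hs).
  assert (Hpos : 0 < Lam).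
  { apply Rnot_le_lt. intro Hl. apply (vanishing_not_nontrivial u); [|assumption].
    apply (clamped_energy_zero (Derive_n u) 0 Lam Hc); try assumption; [lra|].
    intros x Hx. rewrite Hode by assumption. change (Derive_n u 0 x) with (u x). ring. }
  split; [assumption|].
  assert (Hq : 0 < sqrt Lam) by (apply sqrt_lt_R0; assumption).
  set (s := sqrt (sqrt Lam)). assert (Hs0 : 0 < s) by (apply sqrt_lt_R0; assumption).
  assert (Hs4 : s * s * (s * s) = Lam).
  { unfold s. rewrite sqrt_sqrt by lra. apply sqrt_sqrt. lra. }
  set (g := ansatz_chain s s (Coeffs 0 0 (-1) 0 1 0)).
  set (h := ansatz_chain s s (Coeffs 0 0 0 (-1) 0 1)).
  assert (Hdet : g 0%nat 1 * h 1%nat 1 - h 0%nat 1 * g 1%nat 1 = 0).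
  {
    apply (clamped_boundary_determinant (Derive_n u) g h s s (2 * (s * s)) (2 * (s * s * s)));
      try apply ansatz_deriv_chain; try (apply ansatz_fourth_order_ode; auto); auto;
      try (unfold g, h; ansatz_eval; ring); try nra.
    intros x Hx. rewrite Hode, <- Hs4 by assumption. change (Derive_n u 0 x) with (u x). ring. }
  revert Hdet. unfold g, h. ansatz_eval. intro Hdet.
  pose proof (sin_cos_sq s). pose proof (cosh_sinh_sq s).
  apply (Rmult_eq_reg_l s); [|lra]. nra.
Qed.

Lemma sin_INR_PI k : sin (INR k * PI) = 0.
Proof. apply sin_eq_0_1. exists (Z.of_nat k). rewrite <- INR_IZR_INZ. reflexivity. Qed.

Lemma lap_eig_exists n : lap_eig ((INR (S n) * PI) ^ 2).
Proof.
  set (s := INR (S n) * PI). set (p := Coeffs 0 0 0 1 0 0).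
  assert (Hs0 : s <> 0).
  { apply Rmult_integral_contrapositive. split; [apply not_0_INR; lia|apply PI_neq0]. }
  exists (ansatz s 0 p). split; [apply ansatz_smooth|]. split.
  { apply (nontrivial_of_deriv_at0 _ 1); [apply ansatz_smooth|].
    rewrite ansatz_Derive_n. unfold p. ansatz_eval. lra. }
  split; [rewrite ansatz_at0; simpl; ring|]. split.
  { rewrite ansatz_at1. unfold s. rewrite sin_INR_PI. simpl. ring. }
  intros x _. rewrite ansatz_Derive_n. unfold ansatz_chain, ansatz; simpl. ring.
Qed.

(* If s > 0 and s sin s = 2 (1 - cos s), the combination
   (s - sin s)(1 - cos (s x)) - (1 - cos s)(s x - sin (s x)) is a buckling
   eigenfunction for s^2. *)
Lemma buck_eig_exists s : 0 < s -> s * sin s = 2 * (1 - cos s) -> buck_eig (s ^ 2).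
Proof.
  intros Hs Heq.
  set (a := s - sin s). set (b := 1 - cos s).
  assert (Ha : 0 < a) by (unfold a; pose proof (sin_lt_x s Hs); lra).
  pose proof (sin_cos_sq s).
  set (p := Coeffs a (- (s * b)) (- a) b 0 0).
  exists (ansatz s 0 p). split; [apply ansatz_smooth|]. split.
  { apply (nontrivial_of_deriv_at0 _ 2); [apply ansatz_smooth|].
    rewrite ansatz_Derive_n. unfold p. ansatz_eval.
    assert (0 < s * s * a) by (apply Rmult_lt_0_compat; [nra|lra]). intro E. nra. }
  split; [rewrite ansatz_at0; simpl; ring|].
  split; [rewrite ansatz_Derive_n; unfold p; ansatz_eval; ring|].
  split; [rewrite ansatz_at1; unfold p, a, b; simpl; ring|].
  split; [rewrite ansatz_Derive_n; unfold p; ansatz_eval; unfold a, b; nra|].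
  intros x Hx. rewrite !ansatz_Derive_n.
  rewrite (ansatz_fourth_order_ode s 0 p (or_introl eq_refl) x Hx). ring.
Qed.

(* If s > 0 and cos s cosh s = 1, the combination
   (sinh s - sin s)(cosh (s x) - cos (s x)) - (cosh s - cos s)(sinh (s x) - sin (s x))
   is a clamped Bilaplacian eigenfunction for s^4. *)
Lemma bilap_eig_exists s : 0 < s -> cos s * cosh s = 1 -> bilap_eig (s ^ 4).
Proof.
  intros Hs Heq.
  set (a := sinh s - sin s). set (b := cosh s - cos s).
  assert (Hb : 0 < b) by (unfold b; pose proof (cosh_gt_1 s); pose proof (COS_bound s); lra).
  pose proof (sin_cos_sq s). pose proof (cosh_sinh_sq s).
  set (p := Coeffs 0 0 (- a) b a (- b)).
  exists (ansatz s s p). split; [apply ansatz_smooth|]. split.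
  { apply (nontrivial_of_deriv_at0 _ 3); [apply ansatz_smooth|].
    rewrite ansatz_Derive_n. unfold p. ansatz_eval.
    assert (0 < s * s * s * b) by (repeat apply Rmult_lt_0_compat; lra). intro E. nra. }
  split; [rewrite ansatz_at0; simpl; ring|].
  split; [rewrite ansatz_Derive_n; unfold p; ansatz_eval; ring|].
  split; [rewrite ansatz_at1; unfold p, a, b; simpl; ring|].
  split; [rewrite ansatz_Derive_n; unfold p; ansatz_eval; unfold a, b; nra|].
  intros x Hx. rewrite !ansatz_Derive_n.
  rewrite (ansatz_fourth_order_ode s s p (or_intror (conj eq_refl eq_refl)) x Hx).
  unfold ansatz_chain; simpl Nat.iter. ring.
Qed.

Definition increasing_seq (e : nat -> R) : Prop := forall k, e k < e (S k).

Lemma increasing_lt (e : nat -> R) : increasing_seq e -> forall a b, (a < b)%nat -> e a < e b.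
Proof.
  intros He a b Hab. induction Hab as [|b Hab IH]; [apply He|].
  apply (Rlt_trans _ (e b)); [exact IH|apply He].
Qed.

Lemma increasing_lt_iff (e : nat -> R) : increasing_seq e -> forall a b, e a < e b <-> (a < b)%nat.
Proof.
  intros He a b. split; [|apply increasing_lt, He].
  intro Hlt. destruct (Nat.lt_ge_cases a b) as [|Hge]; [assumption|].
  destruct (Nat.eq_dec a b) as [->|Hne]; [lra|].
  pose proof (increasing_lt e He b a ltac:(lia)). lra.
Qed.

(* If the spectrum E is enumerated by an increasing_seq sequence e, then the
   j-th eigenvalue in the sense of nth_eig is e j: the eigenvalues below e k
   are exactly e 0, ..., e (k-1). *)
Lemma nth_eig_enum (E : R -> Prop) (e : nat -> R) :
  increasing_seq e -> (forall y, E y <-> exists k, y = e k) ->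
  forall j x, nth_eig E j x <-> x = e j.
Proof.
  intros He HE.
  assert (Hnodup : forall k, NoDup (map e (seq 0 k))).
  { intro k. apply NoDup_map_NoDup_ForallPairs; [|apply seq_NoDup].
    intros a b _ _ Hab. destruct (Nat.lt_trichotomy a b) as [H|[H|H]]; [|assumption|];
      apply (increasing_lt e He) in H; lra. }
  assert (Hbelow : forall k y, E y /\ y < e k <-> In y (map e (seq 0 k))).
  { intros k y. rewrite in_map_iff, HE. split.
    - intros [[i ->] Hi]. exists i. split; [reflexivity|].
      apply in_seq. apply (increasing_lt_iff e He) in Hi. lia.
    - intros [i [<- Hi]]. apply in_seq in Hi. split; [exists i; reflexivity|].
      apply (increasing_lt e He). lia. }
  intros j x. split.
  - intros [Hx [l [Hlen [Hl Hin]]]]. apply HE in Hx. destruct Hx as [k ->]. f_equal.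
    assert (Hsame : forall y, In y l <-> In y (map e (seq 0 k))).
    { intro y. rewrite Hin. apply Hbelow. }
    pose proof (NoDup_incl_length Hl (fun y => proj1 (Hsame y))).
    pose proof (NoDup_incl_length (Hnodup k) (fun y => proj2 (Hsame y))).
    rewrite length_map, length_seq in *. lia.
  - intros ->. split; [apply HE; exists j; reflexivity|].
    exists (map e (seq 0 j)). split; [rewrite length_map, length_seq; reflexivity|].
    split; [apply Hnodup|]. intro y. symmetry. apply Hbelow.
Qed.

Lemma increasing_pow (e : nat -> R) n :
  0 < e 0%nat -> increasing_seq e -> increasing_seq (fun k => e k ^ S n).
Proof.
  intros H0 He k.
  assert (Hpos : 0 < e k).
  { destruct k as [|k]; [assumption|]. apply (Rlt_trans _ (e 0%nat)); [assumption|].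
    apply (increasing_lt e He). lia. }
  pose proof (He k) as Hk. clear H0 He.
  induction n as [|n IH]; [simpl; lra|].
  change (e k * e k ^ S n < e (S k) * e (S k) ^ S n).
  pose proof (pow_lt (e k) (S n) Hpos). nra.
Qed.

Definition interleave (a b : nat -> R) (k : nat) : R :=
  if Nat.even k then a (Nat.div2 k) else b (Nat.div2 k).

Lemma interleave_even a b n : interleave a b (2 * n) = a n.
Proof. unfold interleave. rewrite Nat.even_even, Nat.div2_double. reflexivity. Qed.

Lemma interleave_odd a b n : interleave a b (2 * n + 1) = b n.
Proof. unfold interleave. rewrite Nat.even_odd, Nat.div2_odd'. reflexivity. Qed.

Lemma interleave_increasing (a b : nat -> R) :
  (forall n, a n < b n) -> (forall n, b n < a (S n)) -> increasing_seq (interleave a b).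
Proof.
  intros Hab Hba k. destruct (Nat.Even_or_Odd k) as [[n ->]|[n ->]].
  - replace (S (2 * n)) with (2 * n + 1)%nat by lia.
    rewrite interleave_even, interleave_odd. apply Hab.
  - replace (S (2 * n + 1)) with (2 * S n)%nat by lia.
    rewrite interleave_even, interleave_odd. apply Hba.
Qed.

Lemma interleave_range (a b : nat -> R) y :
  (exists k, y = interleave a b k) <-> (exists n, y = a n) \/ (exists n, y = b n).
Proof.
  split.
  - intros [k ->]. destruct (Nat.Even_or_Odd k) as [[n ->]|[n ->]].
    + left. exists n. apply interleave_even.
    + right. exists n. apply interleave_odd.
  - intros [[n ->]|[n ->]].
    + exists (2 * n)%nat. symmetry. apply interleave_even.
    + exists (2 * n + 1)%nat. symmetry. apply interleave_odd.
Qed.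

Lemma cos_INR_PI_sq k : cos (INR k * PI) * cos (INR k * PI) = 1.
Proof. pose proof (sin_cos_sq (INR k * PI)). rewrite sin_INR_PI in H. lra. Qed.

Lemma sin_INR_PI_add k x : sin (INR k * PI + x) = cos (INR k * PI) * sin x.
Proof. rewrite sin_plus, sin_INR_PI. ring. Qed.

Lemma cos_INR_PI_add k x : cos (INR k * PI + x) = cos (INR k * PI) * cos x.
Proof. rewrite cos_plus, sin_INR_PI. ring. Qed.

Lemma sin_INR_PI_sub k x : sin (INR k * PI - x) = - cos (INR k * PI) * sin x.
Proof. unfold Rminus. rewrite sin_plus, sin_INR_PI, sin_neg, cos_neg. ring. Qed.

Lemma cos_INR_PI_sub k x : cos (INR k * PI - x) = cos (INR k * PI) * cos x.
Proof. unfold Rminus. rewrite cos_plus, sin_INR_PI, sin_neg, cos_neg. ring. Qed.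

Lemma INR_S_PI_pos n : 0 < INR (S n) * PI.
Proof. apply Rmult_lt_0_compat; [apply lt_0_INR; lia|apply PI_RGT_0]. Qed.

Lemma sin_nonzero_cell k t : INR k * PI < t < INR (S k) * PI -> sin t <> 0.
Proof.
  intros Ht E. destruct (sin_eq_0_0 t E) as [z ->].
  pose proof PI_RGT_0. rewrite S_INR, INR_IZR_INZ in Ht.
  assert (Hz : IZR (Z.of_nat k) < IZR z < IZR (Z.of_nat k) + 1) by (split; nra).
  rewrite <- plus_IZR in Hz. destruct Hz as [H1 H2].
  apply lt_IZR in H1. apply lt_IZR in H2. lia.
Qed.

Lemma cos_nonzero_cell k t : INR k * PI - PI / 2 < t < INR k * PI + PI / 2 -> cos t <> 0.
Proof.
  intros Ht E. destruct (cos_eq_0_0 t E) as [z ->].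
  pose proof PI_RGT_0. rewrite INR_IZR_INZ in Ht.
  assert (Hz : IZR (Z.of_nat k) - 1 < IZR z < IZR (Z.of_nat k)) by (split; nra).
  rewrite <- minus_IZR in Hz. destruct Hz as [H1 H2].
  apply lt_IZR in H1. apply lt_IZR in H2. lia.
Qed.

Lemma sin_pos_zero t : 0 < t -> sin t = 0 -> exists k, t = INR (S k) * PI.
Proof.
  intros Ht E. destruct (sin_eq_0_0 t E) as [z ->]. pose proof PI_RGT_0.
  assert (Hz : (0 < z)%Z) by (apply lt_IZR; nra).
  exists (Z.to_nat z - 1)%nat. f_equal. rewrite INR_IZR_INZ. f_equal. lia.
Qed.

Lemma pi_cell y : 0 <= y -> exists k, INR k * PI <= y < INR (S k) * PI.
Proof.
  intro Hy. pose proof PI_RGT_0.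
  destruct (archimed (y / PI)) as [Hup Hup'].
  assert (Hq : y / PI * PI = y) by (field; lra).
  assert (Hz : (0 < up (y / PI))%Z).
  { apply lt_IZR. assert (0 <= y / PI) by (apply Rdiv_le_0_compat; lra). lra. }
  exists (Z.to_nat (up (y / PI) - 1)).
  rewrite S_INR, INR_IZR_INZ, Znat.Z2Nat.id, minus_IZR by lia. simpl. split; nra.
Qed.

Lemma zero_unique (f df : R -> R) a b :
  (forall x, is_derive f x (df x)) -> (forall x, a < x < b -> df x <> 0) ->
  forall x y, a <= x <= b -> a <= y <= b -> f x = 0 -> f y = 0 -> x = y.
Proof.
  intros Hd Hne.
  assert (Hlt : forall x y, a <= x -> x < y -> y <= b -> f x = 0 -> f y = 0 -> False).
  { intros x y Hx Hxy Hy Ex Ey. destruct (mean_value f df x y Hd Hxy) as [c [Hc Hmvt]].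
    apply (Hne c); [lra|]. rewrite Ex, Ey in Hmvt.
    apply (Rmult_eq_reg_r (y - x)); lra. }
  intros x y Hx Hy Ex Ey. destruct (Rtotal_order x y) as [H|[H|H]].
  - exfalso. exact (Hlt x y ltac:(lra) H ltac:(lra) Ex Ey).
  - assumption.
  - exfalso. exact (Hlt y x ltac:(lra) H ltac:(lra) Ey Ex).
Qed.

Lemma zero_between (f df : R -> R) a b :
  (forall x, is_derive f x (df x)) -> a < b -> f a * f b < 0 ->
  {x | a < x < b /\ f x = 0}.
Proof.
  intros Hd Hab Hsign.
  assert (Hc : continuity f).
  { intro x. apply continuity_pt_filterlim. apply (ex_derive_continuous f x).
    eexists. apply Hd. }
  destruct (IVT_cor f a b Hc ltac:(lra) ltac:(lra)) as [x [Hx Ex]].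
  exists x. split; [|assumption].
  assert (x <> a) by (intro Hxa; rewrite <- Hxa, Ex in Hsign; lra).
  assert (x <> b) by (intro Hxb; rewrite <- Hxb, Ex in Hsign; lra).
  lra.
Qed.

Lemma positive_zero_in_cells (f df : R -> R) c (r : nat -> R) :
  (forall x, is_derive f x (df x)) -> - PI <= c <= 0 -> f 0 = 0 ->
  (forall k x, c + INR k * PI < x < c + INR (S k) * PI -> df x <> 0) ->
  (forall n, c + INR (S n) * PI <= r n <= c + INR (S (S n)) * PI /\ f (r n) = 0) ->
  forall t, 0 < t -> f t = 0 -> exists n, t = r n.
Proof.
  intros Hd Hc H0 Hne Hr t Ht Et.
  destruct (pi_cell (t - c)) as [[|n] Hk]; [lra| |].
  - exfalso.
    assert (t = 0); [|lra].
    apply (zero_unique f df _ _ Hd (Hne 0%nat)); simpl in *; lra.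
  - exists n. destruct (Hr n) as [Hrn Ern].
    apply (zero_unique f df _ _ Hd (Hne (S n))); [lra|lra|assumption|assumption].
Qed.

(* The buckling equation s sin s = 2 (1 - cos s) at s = 2 t reads
   sin t * (sin t - t cos t) = 0; the clamped equation cos s cosh s = 1 reads
   (sin t cosh t - cos t sinh t) (sin t cosh t + cos t sinh t) = 0. *)
Definition buckling_fn (t : R) : R := sin t - t * cos t.
Definition clamped_minus (t : R) : R := sin t * cosh t - cos t * sinh t.
Definition clamped_plus (t : R) : R := sin t * cosh t + cos t * sinh t.

Lemma buckling_half_angle t :
  2 * t * sin (2 * t) - 2 * (1 - cos (2 * t)) = - 4 * sin t * buckling_fn t.
Proof. rewrite sin_2a, cos_2a_sin. unfold buckling_fn. ring. Qed.

Lemma cosh_double t : cosh (2 * t) = cosh t * cosh t + sinh t * sinh t.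
Proof.
  unfold cosh, sinh. replace (2 * t) with (t + t) by ring.
  replace (- (t + t)) with (- t + - t) by ring. rewrite !exp_plus.
  pose proof (exp_plus t (- t)) as E. replace (t + - t) with 0 in E by ring.
  rewrite exp_0 in E. nra.
Qed.

Lemma clamped_half_angle t :
  cos (2 * t) * cosh (2 * t) - 1 = - 2 * clamped_minus t * clamped_plus t.
Proof.
  rewrite cos_2a, cosh_double. unfold clamped_minus, clamped_plus.
  pose proof (sin_cos_sq t). pose proof (cosh_sinh_sq t). nra.
Qed.

Lemma buckling_fn_deriv t : is_derive buckling_fn t (t * sin t).
Proof. unfold buckling_fn. auto_derive; [exact I|ring]. Qed.

Lemma clamped_minus_deriv t : is_derive clamped_minus t (2 * sin t * sinh t).
Proof. unfold clamped_minus, cosh, sinh. auto_derive; [exact I|field]. Qed.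

Lemma clamped_plus_deriv t : is_derive clamped_plus t (2 * cos t * cosh t).
Proof. unfold clamped_plus, cosh, sinh. auto_derive; [exact I|field]. Qed.

Lemma sinh_pos t : 0 < t -> 0 < sinh t.
Proof. intro Ht. rewrite <- sinh_0. apply sinh_lt, Ht. Qed.

Lemma cosh_pos t : 0 < cosh t.
Proof. unfold cosh. pose proof (exp_pos t). pose proof (exp_pos (- t)). lra. Qed.

Lemma buckling_root_exists n :
  {t | INR (S n) * PI < t < INR (S n) * PI + PI / 2 /\ buckling_fn t = 0}.
Proof.
  apply (zero_between buckling_fn (fun t => t * sin t)); [apply buckling_fn_deriv|
    pose proof PI_RGT_0; lra|].
  unfold buckling_fn. rewrite sin_INR_PI, sin_INR_PI_add, cos_INR_PI_add, sin_PI2, cos_PI2.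
  pose proof (cos_INR_PI_sq (S n)). pose proof (INR_S_PI_pos n). nra.
Qed.

Lemma clamped_minus_root_exists n :
  {t | INR (S n) * PI < t < INR (S n) * PI + PI / 2 /\ clamped_minus t = 0}.
Proof.
  apply (zero_between clamped_minus (fun t => 2 * sin t * sinh t));
    [apply clamped_minus_deriv|pose proof PI_RGT_0; lra|].
  unfold clamped_minus. rewrite sin_INR_PI, sin_INR_PI_add, cos_INR_PI_add, sin_PI2, cos_PI2.
  pose proof (cos_INR_PI_sq (S n)). pose proof (sinh_pos _ (INR_S_PI_pos n)).
  pose proof (cosh_pos (INR (S n) * PI + PI / 2)).
  assert (0 < sinh (INR (S n) * PI) * cosh (INR (S n) * PI + PI / 2)) by nra. nra.
Qed.

Lemma clamped_plus_root_exists n :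
  {t | INR (S n) * PI - PI / 2 < t < INR (S n) * PI /\ clamped_plus t = 0}.
Proof.
  apply (zero_between clamped_plus (fun t => 2 * cos t * cosh t));
    [apply clamped_plus_deriv|pose proof PI_RGT_0; lra|].
  unfold clamped_plus. rewrite sin_INR_PI, sin_INR_PI_sub, cos_INR_PI_sub, sin_PI2, cos_PI2.
  pose proof (cos_INR_PI_sq (S n)). pose proof (sinh_pos _ (INR_S_PI_pos n)).
  pose proof (cosh_pos (INR (S n) * PI - PI / 2)).
  assert (0 < sinh (INR (S n) * PI) * cosh (INR (S n) * PI - PI / 2)) by nra. nra.
Qed.

Definition buckling_root n := proj1_sig (buckling_root_exists n).
Definition clamped_minus_root n := proj1_sig (clamped_minus_root_exists n).
Definition clamped_plus_root n := proj1_sig (clamped_plus_root_exists n).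

Lemma buckling_root_spec n :
  INR (S n) * PI < buckling_root n < INR (S n) * PI + PI / 2 /\ buckling_fn (buckling_root n) = 0.
Proof. exact (proj2_sig (buckling_root_exists n)). Qed.

Lemma clamped_minus_root_spec n :
  INR (S n) * PI < clamped_minus_root n < INR (S n) * PI + PI / 2 /\
  clamped_minus (clamped_minus_root n) = 0.
Proof. exact (proj2_sig (clamped_minus_root_exists n)). Qed.

Lemma clamped_plus_root_spec n :
  INR (S n) * PI - PI / 2 < clamped_plus_root n < INR (S n) * PI /\
  clamped_plus (clamped_plus_root n) = 0.
Proof. exact (proj2_sig (clamped_plus_root_exists n)). Qed.

Lemma buckling_zeros t : 0 < t -> sin t * buckling_fn t = 0 ->
  (exists n, t = INR (S n) * PI) \/ (exists n, t = buckling_root n).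
Proof.
  intros Ht E. pose proof PI_RGT_0.
  destruct (Req_dec (sin t) 0) as [Hs|Hs]; [left; apply sin_pos_zero; assumption|right].
  apply (positive_zero_in_cells buckling_fn _ 0 buckling_root buckling_fn_deriv);
    [lra|unfold buckling_fn; rewrite sin_0; ring| | |assumption|].
  - intros k x Hx. rewrite Rplus_0_l, Rplus_0_l in Hx.
    pose proof (pos_INR k). apply Rmult_integral_contrapositive. split; [nra|].
    apply (sin_nonzero_cell k), Hx.
  - intro n. destruct (buckling_root_spec n) as [Hr Er]. rewrite (S_INR (S n)). lra.
  - apply Rmult_integral in E. tauto.
Qed.

Lemma clamped_zeros t : 0 < t -> clamped_minus t * clamped_plus t = 0 ->
  (exists n, t = clamped_plus_root n) \/ (exists n, t = clamped_minus_root n).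
Proof.
  intros Ht E. pose proof PI_RGT_0.
  apply Rmult_integral in E. destruct E as [E|E]; [right|left].
  - apply (positive_zero_in_cells clamped_minus _ 0 clamped_minus_root clamped_minus_deriv);
      [lra|unfold clamped_minus; rewrite sin_0, sinh_0; ring| | |assumption|assumption].
    + intros k x Hx. rewrite Rplus_0_l, Rplus_0_l in Hx. pose proof (pos_INR k).
      pose proof (sin_nonzero_cell k x Hx). pose proof (sinh_pos x ltac:(nra)).
      apply Rmult_integral_contrapositive. split; [|lra].
      apply Rmult_integral_contrapositive. split; lra.
    + intro n. destruct (clamped_minus_root_spec n) as [Hr Er]. rewrite (S_INR (S n)). lra.
  - apply (positive_zero_in_cells clamped_plus _ (- (PI / 2)) clamped_plus_root
      clamped_plus_deriv); [lra|unfold clamped_plus; rewrite sin_0, sinh_0; ring| | |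
      assumption|assumption].
    + intros k x Hx. rewrite S_INR in Hx.
      pose proof (cos_nonzero_cell k x ltac:(lra)). pose proof (cosh_pos x).
      apply Rmult_integral_contrapositive. split; [|lra].
      apply Rmult_integral_contrapositive. split; lra.
    + intro n. destruct (clamped_plus_root_spec n) as [Hr Er]. rewrite (S_INR (S n)). lra.
Qed.

(* Halves of the square roots of the buckling eigenvalues, and of the fourth
   roots of the clamped eigenvalues, in increasing_seq order. *)
Definition buckling_half : nat -> R := interleave (fun n => INR (S n) * PI) buckling_root.
Definition clamped_half : nat -> R := interleave clamped_plus_root clamped_minus_root.

Lemma buckling_half_increasing : increasing_seq buckling_half.
Proof.
  apply interleave_increasing; intro n; destruct (buckling_root_spec n) as [Hr _];
    [lra|rewrite (S_INR (S n)); pose proof PI_RGT_0; lra].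
Qed.

Lemma clamped_half_increasing : increasing_seq clamped_half.
Proof.
  apply interleave_increasing; intro n; destruct (clamped_minus_root_spec n) as [Hm _].
  - destruct (clamped_plus_root_spec n) as [Hp _]. lra.
  - destruct (clamped_plus_root_spec (S n)) as [Hp _]. rewrite (S_INR (S n)) in Hp. lra.
Qed.

Lemma buckling_half_pos k : 0 < buckling_half k.
Proof.
  unfold buckling_half. destruct (Nat.Even_or_Odd k) as [[n ->]|[n ->]].
  - rewrite interleave_even. apply INR_S_PI_pos.
  - rewrite interleave_odd. pose proof (buckling_root_spec n). pose proof (INR_S_PI_pos n). lra.
Qed.

Lemma clamped_half_pos k : 0 < clamped_half k.
Proof.
  unfold clamped_half. pose proof PI_RGT_0. destruct (Nat.Even_or_Odd k) as [[n ->]|[n ->]].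
  - rewrite interleave_even. destruct (clamped_plus_root_spec n) as [Hr _].
    rewrite S_INR in Hr. pose proof (pos_INR n). nra.
  - rewrite interleave_odd. pose proof (clamped_minus_root_spec n).
    pose proof (INR_S_PI_pos n). lra.
Qed.

Definition lap_seq (k : nat) : R := (INR (S k) * PI) ^ 2.
Definition buck_seq (k : nat) : R := (2 * buckling_half k) ^ 2.
Definition bilap_seq (k : nat) : R := (2 * clamped_half k) ^ 4.

Lemma lap_seq_increasing : increasing_seq lap_seq.
Proof.
  apply (increasing_pow (fun k => INR (S k) * PI) 1); [apply INR_S_PI_pos|].
  intro k. rewrite (S_INR (S k)). pose proof PI_RGT_0. lra.
Qed.

Lemma buck_seq_increasing : increasing_seq buck_seq.
Proof.
  apply (increasing_pow (fun k => 2 * buckling_half k) 1); [pose proof (buckling_half_pos 0); lra|].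
  intro k. pose proof (buckling_half_increasing k). lra.
Qed.

Lemma bilap_seq_increasing : increasing_seq bilap_seq.
Proof.
  apply (increasing_pow (fun k => 2 * clamped_half k) 3); [pose proof (clamped_half_pos 0); lra|].
  intro k. pose proof (clamped_half_increasing k). lra.
Qed.

(* Each spectrum is exactly the range of its sequence: the characteristic
   equations give one inclusion, the explicit eigenfunctions the other. *)
Lemma lap_eig_iff lam : lap_eig lam <-> exists k, lam = lap_seq k.
Proof.
  split; [|intros [k ->]; apply lap_eig_exists].
  intro H. destruct (lap_eig_sin lam H) as [Hpos Hsin].
  destruct (sin_pos_zero (sqrt lam) (sqrt_lt_R0 _ Hpos) Hsin) as [k Hk].
  exists k. unfold lap_seq. rewrite <- Hk, pow2_sqrt; lra.
Qed.

Lemma buck_eig_iff sig : buck_eig sig <-> exists k, sig = buck_seq k.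
Proof.
  unfold buck_seq, buckling_half. split.
  - intro H. destruct (buck_eig_eq sig H) as [Hpos Heq].
    set (t := sqrt sig / 2). assert (Ht : 0 < t) by (unfold t; pose proof (sqrt_lt_R0 _ Hpos); lra).
    assert (Hs : sqrt sig = 2 * t) by (unfold t; field).
    assert (Hz : sin t * buckling_fn t = 0).
    { pose proof (buckling_half_angle t). rewrite <- Hs in H0. lra. }
    destruct (proj2 (interleave_range (fun n => INR (S n) * PI) buckling_root t)
      (buckling_zeros t Ht Hz)) as [k Hk].
    exists k. rewrite <- Hk, <- Hs, pow2_sqrt; lra.
  - intros [k ->]. set (t := interleave _ _ k).
    assert (Ht : 0 < t) by apply buckling_half_pos.
    apply buck_eig_exists; [lra|].
    assert (Hz : sin t * buckling_fn t = 0).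
    { destruct (proj1 (interleave_range _ _ t) (ex_intro _ k eq_refl)) as [[n Hn]|[n Hn]];
        rewrite Hn; [rewrite sin_INR_PI|rewrite (proj2 (buckling_root_spec n))]; ring. }
    pose proof (buckling_half_angle t). lra.
Qed.

Lemma bilap_eig_iff Lam : bilap_eig Lam <-> exists k, Lam = bilap_seq k.
Proof.
  unfold bilap_seq, clamped_half. split.
  - intro H. destruct (bilap_eig_eq Lam H) as [Hpos Heq].
    assert (Hq : 0 < sqrt Lam) by (apply sqrt_lt_R0; assumption).
    set (t := sqrt (sqrt Lam) / 2).
    assert (Ht : 0 < t) by (unfold t; pose proof (sqrt_lt_R0 _ Hq); lra).
    assert (Hs : sqrt (sqrt Lam) = 2 * t) by (unfold t; field).
    assert (Hz : clamped_minus t * clamped_plus t = 0).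
    { pose proof (clamped_half_angle t). rewrite <- Hs in H0. lra. }
    destruct (proj2 (interleave_range clamped_plus_root clamped_minus_root t)
      (clamped_zeros t Ht Hz)) as [k Hk].
    exists k. rewrite <- Hk, <- Hs.
    replace 4%nat with (2 * 2)%nat by reflexivity. rewrite pow_mult, !pow2_sqrt; lra.
  - intros [k ->]. set (t := interleave _ _ k).
    assert (Ht : 0 < t) by apply clamped_half_pos.
    apply bilap_eig_exists; [lra|].
    assert (Hz : clamped_minus t * clamped_plus t = 0).
    { destruct (proj1 (interleave_range _ _ t) (ex_intro _ k eq_refl)) as [[n Hn]|[n Hn]];
        rewrite Hn; [rewrite (proj2 (clamped_plus_root_spec n))
                    |rewrite (proj2 (clamped_minus_root_spec n))]; ring. }
    pose proof (clamped_half_angle t). lra.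
Qed.

Lemma cos_INR_PI_cancel k a : cos (INR k * PI) * a = 0 -> a = 0.
Proof.
  intro E. pose proof (cos_INR_PI_sq k).
  apply Rmult_integral in E. destruct E as [Hc|Ha]; [rewrite Hc in *; lra|assumption].
Qed.

(* sin c + cos c >= 1 on (0, pi/2), since (sin c + cos c)^2 >= 1. *)
Lemma sin_add_cos_ge_1 c : 0 < c < PI / 2 -> 1 <= sin c + cos c.
Proof.
  intro Hc. pose proof (sin_gt_0 c ltac:(lra) ltac:(pose proof PI_RGT_0; lra)).
  pose proof (cos_gt_0 c ltac:(lra) ltac:(lra)). pose proof (sin_cos_sq c). nra.
Qed.

(* On (0, pi/2), sin x < cos x forces x < pi/4, with distance to pi/4
   controlled by cos x - sin x, whose derivative is at most -1 there. *)
Lemma quarter_gap x : 0 < x < PI / 2 -> sin x < cos x ->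
  x < PI / 4 /\ PI / 4 - x <= cos x - sin x.
Proof.
  intros Hx Hlt. pose proof PI_RGT_0.
  set (phi := fun y => cos y - sin y).
  assert (Hd : forall y, is_derive phi y (- (sin y + cos y))).
  { intro y. unfold phi. auto_derive; [exact I|ring]. }
  assert (Hphi : phi (PI / 4) = 0) by (unfold phi; rewrite cos_PI4, sin_PI4; ring).
  assert (Hx4 : x < PI / 4).
  { apply Rnot_le_lt. intro Hle. destruct (Rle_lt_or_eq_dec _ _ Hle) as [Hl|He].
    - destruct (mean_value phi _ (PI / 4) x Hd Hl) as [c [Hc Hmvt]].
      pose proof (sin_add_cos_ge_1 c ltac:(lra)). unfold phi in Hmvt, Hphi. nra.
    - subst x. unfold phi in Hphi. lra. }
  split; [assumption|].
  destruct (mean_value phi _ x (PI / 4) Hd Hx4) as [c [Hc Hmvt]].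
  pose proof (sin_add_cos_ge_1 c ltac:(lra)). unfold phi in Hmvt, Hphi. nra.
Qed.

(* The phase equation tan x = tanh t, shared by the zeros of clamped_minus
   and clamped_plus, pins x to pi/4 up to an error 2 e^{-2t}. *)
Lemma clamped_phase_bound x t : 0 < x < PI / 2 -> 0 < t ->
  sin x * cosh t = cos x * sinh t -> x < PI / 4 /\ PI / 4 - x <= 2 / exp (2 * t).
Proof.
  intros Hx Ht E. pose proof PI_RGT_0.
  pose proof (cos_gt_0 x ltac:(lra) ltac:(lra)) as Hcos. pose proof (COS_bound x).
  pose proof (exp_pos t). pose proof (exp_pos (- t)).
  assert (Hexp : exp (- t) * exp t = 1).
  { rewrite <- exp_plus. replace (- t + t) with 0 by ring. apply exp_0. }
  assert (Hlt : sin x < cos x).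
  { apply (Rmult_lt_reg_r (cosh t)); [apply cosh_pos|]. rewrite E.
    apply Rmult_lt_compat_l; [assumption|]. unfold sinh, cosh. lra. }
  destruct (quarter_gap x Hx Hlt) as [H4 Hgap]. split; [assumption|].
  assert (Hdiff : (cos x - sin x) * cosh t = cos x * exp (- t)).
  { unfold cosh, sinh in *. nra. }
  assert (Hbound : (cos x - sin x) * exp t <= 2 * exp (- t)) by (unfold cosh in Hdiff; nra).
  replace (2 * t) with (t + t) by ring. rewrite exp_plus.
  apply (Rle_trans _ (cos x - sin x)); [assumption|].
  apply (Rmult_le_reg_r (exp t * exp t)); [nra|].
  unfold Rdiv. rewrite Rmult_assoc, Rinv_l by nra. nra.
Qed.

Lemma clamped_plus_root_bound n : INR (S n) * PI - PI / 4 < clamped_plus_root n.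
Proof.
  destruct (clamped_plus_root_spec n) as [Hr E]. pose proof PI_RGT_0.
  set (t := clamped_plus_root n) in *. set (x := INR (S n) * PI - t).
  assert (Hrx : t = INR (S n) * PI - x) by (unfold x; ring).
  unfold clamped_plus in E. rewrite Hrx, sin_INR_PI_sub, cos_INR_PI_sub, <- Hrx in E.
  assert (Hphase : sin x * cosh t = cos x * sinh t).
  { assert (Hprod : cos x * sinh t - sin x * cosh t = 0); [|lra].
    apply (cos_INR_PI_cancel (S n)). rewrite <- E. ring. }
  pose proof (INR_S_PI_pos n). rewrite S_INR in Hr. pose proof (pos_INR n).
  destruct (clamped_phase_bound x t); [unfold x; rewrite S_INR; lra|nra|assumption|].
  unfold x in *. lra.
Qed.

(* exp 6 > 2^6, from exp 1 > 2. *)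
Lemma exp_six_gt : 64 < exp 6.
Proof.
  pose proof (exp_ineq1 1 ltac:(lra)).
  replace 6 with (1 + 1 + 1 + 1 + 1 + 1) by ring. rewrite !exp_plus.
  set (e := exp 1). assert (He : 2 < e) by (unfold e; lra).
  assert (4 < e * e) by nra. assert (16 < (e * e) * (e * e)) by nra.
  assert (64 < (e * e) * (e * e) * (e * e)) by nra. lra.
Qed.

Lemma exp_six_dominates n : 40 * INR (S n) <= exp (6 * INR (S n)).
Proof.
  pose proof exp_six_gt. induction n as [|n IH].
  - simpl. rewrite !Rmult_1_r. lra.
  - rewrite (S_INR (S n)), !Rmult_plus_distr_l, !Rmult_1_r, exp_plus.
    assert (1 <= INR (S n)) by (rewrite S_INR; pose proof (pos_INR n); lra).
    assert (0 <= (exp (6 * INR (S n)) - 40 * INR (S n)) * exp 6) by (apply Rmult_le_pos; lra).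
    nra.
Qed.

Lemma clamped_minus_root_bound n :
  PI / 4 - 1 / (20 * INR (S n)) <= clamped_minus_root n - INR (S n) * PI.
Proof.
  destruct (clamped_minus_root_spec n) as [Hr E]. pose proof PI2_3_2.
  set (t := clamped_minus_root n) in *. set (x := t - INR (S n) * PI).
  assert (Hrx : t = INR (S n) * PI + x) by (unfold x; ring).
  unfold clamped_minus in E. rewrite Hrx, sin_INR_PI_add, cos_INR_PI_add, <- Hrx in E.
  assert (Hphase : sin x * cosh t = cos x * sinh t).
  { assert (Hprod : sin x * cosh t - cos x * sinh t = 0); [|lra].
    apply (cos_INR_PI_cancel (S n)). rewrite <- E. ring. }
  pose proof (INR_S_PI_pos n).
  assert (Hm : 1 <= INR (S n)) by (rewrite S_INR; pose proof (pos_INR n); lra).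
  destruct (clamped_phase_bound x t) as [_ Hgap]; [unfold x; lra|lra|assumption|].
  assert (Hexp : 40 * INR (S n) <= exp (2 * t)).
  { apply (Rle_trans _ _ _ (exp_six_dominates n)).
    destruct (Req_dec (6 * INR (S n)) (2 * t)) as [->|Hne]; [lra|].
    left. apply exp_increasing. nra. }
  assert (2 / exp (2 * t) <= 1 / (20 * INR (S n))).
  { pose proof (exp_pos (2 * t)). apply (Rmult_le_reg_r (20 * INR (S n) * exp (2 * t))); [nra|].
    replace (2 / exp (2 * t) * (20 * INR (S n) * exp (2 * t))) with (40 * INR (S n))
      by (field; lra).
    replace (1 / (20 * INR (S n)) * (20 * INR (S n) * exp (2 * t))) with (exp (2 * t))
      by (field; lra).
    assumption. }
  unfold x in Hgap. lra.
Qed.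

(* Even index 2n: Lam = (2 A)^4 with A > (n+1) pi - pi/4, against
   lam * sig = ((2n+1)(2n+2) pi^2)^2, using (2n+1)(2n+2) < (2n+3/2)^2. *)
Lemma spectral_gap_even n : lap_seq (2 * n) * buck_seq (2 * n) < bilap_seq (2 * n).
Proof.
  unfold lap_seq, buck_seq, bilap_seq, buckling_half, clamped_half.
  rewrite !interleave_even.
  pose proof (clamped_plus_root_bound n) as HA. pose proof PI_RGT_0. pose proof (pos_INR n).
  rewrite S_INR in HA. replace (INR (S (2 * n))) with (2 * INR n + 1)
    by (rewrite S_INR, mult_INR; simpl; ring).
  set (a := INR n) in *. set (X := 2 * clamped_plus_root n).
  set (Y := (2 * a + 1) * (2 * a + 2) * (PI * PI)).
  assert (HX : (2 * a + 3 / 2) * PI < X) by (unfold X; lra).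
  assert (HY : Y < X * X).
  { apply (Rlt_trans _ (((2 * a + 3 / 2) * PI) * ((2 * a + 3 / 2) * PI))).
    - unfold Y. assert (0 < PI * PI) by nra. nra.
    - apply Rmult_le_0_lt_compat; nra. }
  assert (0 < Y) by (unfold Y; nra).
  replace (((2 * a + 1) * PI) ^ 2 * (2 * (INR (S n) * PI)) ^ 2) with (Y * Y)
    by (unfold Y, a; rewrite S_INR; ring).
  replace (X ^ 4) with ((X * X) * (X * X)) by ring. nra.
Qed.

(* Odd index 2n+1: with m = n+1, Lam = (2B)^4 where B = m pi + x and
   x >= pi/4 - 1/(20m), against lam * sig = (2 m pi)^2 (2T)^2 where
   T < m pi + pi/2; it suffices that m pi T < B^2. *)
Lemma spectral_gap_odd n :
  lap_seq (2 * n + 1) * buck_seq (2 * n + 1) < bilap_seq (2 * n + 1).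
Proof.
  unfold lap_seq, buck_seq, bilap_seq, buckling_half, clamped_half.
  rewrite !interleave_odd.
  pose proof (clamped_minus_root_bound n) as Hx. destruct (buckling_root_spec n) as [HT _].
  pose proof PI_RGT_0. pose proof PI2_3_2. pose proof PI_4.
  replace (INR (S (2 * n + 1))) with (2 * INR (S n))
    by (rewrite !S_INR, plus_INR, mult_INR; simpl; ring).
  assert (Hm : 1 <= INR (S n)) by (rewrite S_INR; pose proof (pos_INR n); lra).
  set (m := INR (S n)) in *. set (T := buckling_root n) in *.
  set (x := clamped_minus_root n - m * PI) in *.
  replace (clamped_minus_root n) with (m * PI + x) by (unfold x; ring).
  assert (Hx7 : 7 / 10 <= x).
  { assert (1 / (20 * m) <= 1 / 20)
      by (apply Rmult_le_compat_l; [lra|]; apply Rinv_le_contravar; lra).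
    lra. }
  assert (Hphase : - PI / 10 <= m * PI * (2 * x - PI / 2)).
  { assert (Hm' : m * PI * (- (1 / (10 * m))) = - PI / 10) by (field; lra).
    rewrite <- Hm'. apply Rmult_le_compat_l; [nra|].
    replace (1 / (10 * m)) with (2 * (1 / (20 * m))) by (field; lra). lra. }
  assert (HmT : m * PI * T < (m * PI + x) * (m * PI + x)).
  { assert (m * PI * T < m * PI * (m * PI + PI / 2)) by (apply Rmult_lt_compat_l; nra).
    assert (49 / 100 <= x * x) by nra.
    replace ((m * PI + x) * (m * PI + x))
      with (m * PI * (m * PI + PI / 2) + (m * PI * (2 * x - PI / 2) + x * x)) by ring.
    lra. }
  assert (0 < m * PI * T) by (apply Rmult_lt_0_compat; nra).
  set (B := m * PI + x) in *.
  replace ((2 * m * PI) ^ 2 * (2 * T) ^ 2) with (16 * ((m * PI * T) * (m * PI * T))) by ring.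
  replace ((2 * B) ^ 4) with (16 * ((B * B) * (B * B))) by ring.
  nra.
Qed.

Lemma spectral_gap j : lap_seq j * buck_seq j < bilap_seq j.
Proof.
  destruct (Nat.Even_or_Odd j) as [[n ->]|[n ->]];
    [apply spectral_gap_even|apply spectral_gap_odd].
Qed.


Theorem proposition4p1 (j : nat) :
  (exists Lam lam sig : R,
     nth_eig bilap_eig j Lam /\ nth_eig lap_eig j lam /\ nth_eig buck_eig j sig) /\
  (forall Lam lam sig : R,
     nth_eig bilap_eig j Lam -> nth_eig lap_eig j lam -> nth_eig buck_eig j sig ->
     Lam > lam * sig).
Proof.
  pose proof (nth_eig_enum bilap_eig bilap_seq bilap_seq_increasing bilap_eig_iff) as HA.
  pose proof (nth_eig_enum lap_eig lap_seq lap_seq_increasing lap_eig_iff) as HL.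
  pose proof (nth_eig_enum buck_eig buck_seq buck_seq_increasing buck_eig_iff) as HB.
  split.
  - exists (bilap_seq j), (lap_seq j), (buck_seq j).
    split; [apply HA|split; [apply HL|apply HB]]; reflexivity.
  - intros Lam lam sig HLam Hlam Hsig.
    apply HA in HLam. apply HL in Hlam. apply HB in Hsig. subst.
    apply spectral_gap.
Qed.
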